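(* Let $\mathbf{p}_1,\mathbf{p}_2,\mathbf{p}_3\in\mathbb{R}^n$, and set $a=\|\mathbf{p}_1-\mathbf{p}_2\|$, $b=\|\mathbf{p}_2-\mathbf{p}_3\|$, $c=\|\mathbf{p}_1-\mathbf{p}_3\|$. Then the degree of monotonicity of the sequence $\mathbf{p}_1,\mathbf{p}_2,\mathbf{p}_3$ equals \[ R=\begin{cases}\tfrac12 c & \text{if } a^2+b^2>c^2,\\ R^{\mathrm{outcircle}} & \text{otherwise,}\end{cases} \] where $R^{\mathrm{outcircle}}$ is the radius of the circle passing through $\mathbf{p}_1,\mathbf{p}_2,\mathbf{p}_3$.
   Context: A closed ball in $\mathbb{R}^n$ is a set $\{x:\|x-q\|\le\rho\}$ with radius $\rho$. The degree of monotonicity of a finite sequence (vector-valued signal) $\mathbf{p}_1,\mathbf{p}_2,\mathbf{p}_3$ is the largest value $R$ such that, for every closed ball $B$ of radius at most $R$, the set of indices $\{i\in\{1,2,3\}:\mathbf{p}_i\in B\}$ is a set of consecutive integers. The circumradius $R^{\mathrm{outcircle}}$ of the three points is given (whenever $a,b,c>0$) by Heron's formula $R^{\mathrm{outcircle}}=\frac{abc}{4\sqrt{\sigma(\sigma-a)(\sigma-b)(\sigma-c)}}$ with $\sigma=(a+b+c)/2$. *)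

From HB Require Import structures.
From mathcomp Require Import all_boot all_order all_algebra.
From mathcomp Require Import all_classical all_reals all_analysis.
Set Implicit Arguments. Unset Strict Implicit. Unset Printing Implicit Defensive.
Import Order.TTheory GRing.Theory Num.Theory.
Local Open Scope classical_set_scope.
Local Open Scope ring_scope.

Definition enorm (R : realType) (n : nat) (x : 'rV[R]_n) : R :=
  Num.sqrt (\sum_(i < n) (x ord0 i) ^+ 2).

Definition cball (R : realType) (n : nat) (q : 'rV[R]_n) (rho : R) : set 'rV[R]_n :=
  [set x | enorm (x - q) <= rho].

Definition consecutive_in (R : realType) (n : nat) (s : seq 'rV[R]_n)
    (B : set 'rV[R]_n) : Prop :=
  forall i j k : nat, (i <= j)%N -> (j <= k)%N -> (k < size s)%N ->
    B (nth 0 s i) -> B (nth 0 s k) -> B (nth 0 s j).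

Definition mono_ok (R : realType) (n : nat) (s : seq 'rV[R]_n) (r : R) : Prop :=
  forall (q : 'rV[R]_n) (rho : R), rho <= r -> consecutive_in s (cball q rho).

Definition degree_monotonicity (R : realType) (n : nat) (s : seq 'rV[R]_n) : \bar R :=
  ereal_sup [set (r%:E)%E | r in [set r | mono_ok s r]].

(* Circumradius by Heron's formula; +oo when the triangle is degenerate
   (Heron radicand = 0: collinear or coincident points). *)
Definition outradius (R : realType) (a b c : R) : \bar R :=
  let sg := (a + b + c) / 2 in
  let D := sg * (sg - a) * (sg - b) * (sg - c) in
  if 0 < D then ((a * b * c / (4 * Num.sqrt D))%:E)%E else (+oo)%E.

(* Translate so that p2 is the origin, with u = p1 - p2 and v = p3 - p2.  A ball
   of radius at most R breaks monotonicity exactly when it contains u and v but not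
   0, so the degree is the infimum of the radii of such separating balls.
   Any ball containing u and v has radius at least |u - v| / 2, and when the angle
   at the origin is acute (<u, v> > 0) the ball on the segment [u, v] as a diameter
   separates.  Otherwise write the circumcenter o of 0, u, v as lam u + mu v: a
   non-acute angle at the origin gives lam, mu >= 0 and lam + mu >= 1, and for a
   separating ball B(w, rho) this yields 2 <o, w> >= 2 |o|^2 + |w|^2 - rho^2, so
   0 <= |w - o|^2 forces rho >= |o|; the balls centred at k o, k > 1, separate.
   Heron's formula identifies |o| with the circumradius.
   When 0, u, v are collinear with the origin between u and v, no ball separates. *)

From HB Require Import structures.
From mathcomp Require Import all_boot all_order all_algebra.
From mathcomp Require Import all_classical all_reals all_analysis.
From mathcomp Require Import ring lra.
Import Order.TTheory GRing.Theory Num.Theory.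
Set Implicit Arguments. Unset Strict Implicit. Unset Printing Implicit Defensive.
Local Open Scope ring_scope.

Section EuclideanSpace.
Variables (R : realType) (n : nat).
Implicit Types (x y z : 'rV[R]_n) (k rho : R).

Definition dot x y : R := \sum_(i < n) x ord0 i * y ord0 i.

Lemma dotC x y : dot x y = dot y x.
Proof. by apply: eq_bigr => i _; rewrite mulrC. Qed.

Lemma dotDl x y z : dot (x + y) z = dot x z + dot y z.
Proof. by rewrite /dot -big_split; apply: eq_bigr => i _; rewrite !mxE mulrDl. Qed.

Lemma dotZl k x y : dot (k *: x) y = k * dot x y.
Proof. by rewrite /dot mulr_sumr; apply: eq_bigr => i _; rewrite !mxE mulrA. Qed.

Lemma dotNl x y : dot (- x) y = - dot x y.
Proof. by rewrite -scaleN1r dotZl mulN1r. Qed.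

Lemma dotDr x y z : dot x (y + z) = dot x y + dot x z.
Proof. by rewrite dotC dotDl !(dotC x). Qed.

Lemma dotZr k x y : dot x (k *: y) = k * dot x y.
Proof. by rewrite dotC dotZl dotC. Qed.

Lemma dotNr x y : dot x (- y) = - dot x y.
Proof. by rewrite dotC dotNl dotC. Qed.

Definition dotE := (dotDl, dotDr, dotZl, dotZr, dotNl, dotNr).

Lemma dot_ge0 x : 0 <= dot x x.
Proof. by apply: sumr_ge0 => i _; rewrite -expr2 sqr_ge0. Qed.

Lemma dot_self_eq0 x y : dot x x = 0 -> dot x y = 0.
Proof.
move=> /eqP; rewrite psumr_eq0 => [/allP x0|i _]; last by rewrite -expr2 sqr_ge0.
apply: big1 => i _; have := x0 i (mem_index_enum i).
by rewrite mulf_eq0 orbb => /eqP ->; rewrite mul0r.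
Qed.

Lemma enorm_sq x : enorm x ^+ 2 = dot x x.
Proof. exact/sqr_sqrtr/dot_ge0. Qed.

Lemma enorm_ge0 x : 0 <= enorm x.
Proof. exact: sqrtr_ge0. Qed.

Lemma enormE x : enorm x = Num.sqrt (dot x x).
Proof. by congr Num.sqrt; apply: eq_bigr => i _; rewrite expr2. Qed.

Lemma enormZ k x : enorm (k *: x) = `|k| * enorm x.
Proof.
rewrite /enorm -sqrtr_sqr -sqrtrM ?sqr_ge0 // mulr_sumr.
by congr Num.sqrt; apply: eq_bigr => i _; rewrite mxE exprMn.
Qed.

Lemma enormN x : enorm (- x) = enorm x.
Proof. by rewrite -scaleN1r enormZ normrN normr1 mul1r. Qed.

Lemma enorm_le x rho : 0 <= rho -> (enorm x <= rho) = (dot x x <= rho ^+ 2).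
Proof. by move=> rho0; rewrite -enorm_sq ler_pXn2r ?nnegrE ?enorm_ge0. Qed.

Lemma enorm_gt x rho : 0 <= rho -> (rho < enorm x) = (rho ^+ 2 < dot x x).
Proof. by move=> rho0; rewrite -enorm_sq ltr_pXn2r ?nnegrE ?enorm_ge0. Qed.

Lemma enorm_ltE x y : (enorm x < enorm y) = (dot x x < dot y y).
Proof. by rewrite -!enorm_sq (@ltr_pXn2r _ 2) ?nnegrE ?enorm_ge0. Qed.

Lemma dotBB x y : dot (x - y) (x - y) = dot x x - 2 * dot x y + dot y y.
Proof. rewrite !dotE (dotC y x); ring. Qed.

Lemma dot_equidistant x y : enorm (x - y) = enorm y -> dot x x = 2 * dot x y.
Proof. by move/(congr1 (fun t => t ^+ 2)); rewrite !enorm_sq dotBB; lra. Qed.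

Lemma dotDD_le x y : dot (x + y) (x + y) <= 2 * (dot x x + dot y y).
Proof. have := dot_ge0 (x - y); rewrite dotBB !dotE (dotC y x); lra. Qed.

End EuclideanSpace.

Lemma ereal_sup_EFin_eq (R : realType) (S : set R) (x : R) :
  (forall r, r < x -> S r) -> (forall r, S r -> r <= x) ->
  ereal_sup [set r%:E | r in S] = x%:E.
Proof.
move=> Sx leSx; apply/eqP; rewrite eq_le; apply/andP; split.
  by apply/ereal_supP => _ [r Sr <-]; rewrite lee_fin leSx.
apply/lee_subgt0Pr => e e0; apply: le_ereal_sup_tmp.
by exists (x - e)%:E; [exists (x - e) => //; apply: Sx; lra | rewrite EFinB].
Qed.

Lemma heron_sq (R : realFieldType) (a b c : R) :
  let s := (a + b + c) / 2 in
  s * (s - a) * (s - b) * (s - c) =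
  (4 * a ^+ 2 * b ^+ 2 - (a ^+ 2 + b ^+ 2 - c ^+ 2) ^+ 2) / 16.
Proof. by move=> s; rewrite /s; field. Qed.

Section SeparatingBalls.
Variables (R : realType) (n : nat).
Implicit Types (u v w o : 'rV[R]_n) (rho r : R).

Definition separating_ball u v w rho :=
  [/\ enorm (u - w) <= rho, enorm (v - w) <= rho & rho < enorm w].

Definition no_separating_ball u v r :=
  forall w rho, rho <= r -> ~ separating_ball u v w rho.

Definition separation_degree u v : \bar R :=
  ereal_sup [set r%:E | r in [set r | no_separating_ball u v r]].

Lemma separating_ball_translate (p1 p2 p3 q : 'rV[R]_n) rho :
  separating_ball (p1 - p2) (p3 - p2) (q - p2) rho <->
  [/\ cball q rho p1, cball q rho p3 & ~ cball q rho p2].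
Proof.
have shift p : p - p2 - (q - p2) = p - q by rewrite opprB addrA subrK.
rewrite /separating_ball /cball /= !shift -[q - p2]opprB enormN ltNge.
by split=> -[in1 in3 /negP out2].
Qed.

Lemma degree_monotonicity3 (p1 p2 p3 : 'rV[R]_n) :
  degree_monotonicity [:: p1; p2; p3] = separation_degree (p1 - p2) (p3 - p2).
Proof.
rewrite /degree_monotonicity /separation_degree; congr (ereal_sup [set _ | _ in _]).
apply/funext => r; apply/propext; split=> [ok w rho le_r|ok q rho le_r].
  rewrite -[w](addrK p2) separating_ball_translate => -[in1 in3].
  by apply; exact: (ok _ _ le_r 0 1 2)%N.
move=> [|[|[|i]]] [|[|[|j]]] [|[|[|k]]] //= _ _ _ in1 in3; apply/idPn => /negP out2.
by apply: (ok (q - p2) rho le_r); rewrite separating_ball_translate.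
Qed.

Lemma enormB_le_diameter u v w rho :
  enorm (u - w) <= rho -> enorm (v - w) <= rho -> enorm (u - v) <= 2 * rho.
Proof.
move=> uw vw; have rho0 : 0 <= rho := le_trans (enorm_ge0 _) uw.
rewrite enorm_le ?mulr_ge0 //; move: uw vw; rewrite -[v - w]opprB enormN.
rewrite !enorm_le // => uw vw; have := dotDD_le (u - w) (w - v).
rewrite addrA subrK; lra.
Qed.

Lemma enormB_lt_dot u w : enorm (u - w) < enorm w -> dot u u < 2 * dot u w.
Proof. by rewrite enorm_ltE dotBB; lra. Qed.

Lemma separating_ball_max u v w :
  enorm (u - w) < enorm w -> enorm (v - w) < enorm w ->
  separating_ball u v w (Num.max (enorm (u - w)) (enorm (v - w))).
Proof. by move=> uw vw; split; rewrite ?le_max ?lexx ?orbT // gt_max uw vw. Qed.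

Lemma circumcenter_enorm_le u v w o lam mu rho :
  o = lam *: u + mu *: v -> 0 <= lam -> 0 <= mu -> 1 <= lam + mu ->
  enorm (u - o) = enorm o -> enorm (v - o) = enorm o ->
  separating_ball u v w rho -> enorm o <= rho.
Proof.
move=> o_def lam0 mu0 lam_mu /dot_equidistant uo /dot_equidistant vo [uw vw ow].
have rho0 : 0 <= rho := le_trans (enorm_ge0 _) uw.
move: uw vw ow; rewrite !enorm_le // enorm_gt // !dotBB => uw vw ow.
have wo : dot w o = lam * dot u w + mu * dot v w.
  by rewrite o_def !dotE (dotC w u) (dotC w v).
have oo : dot o o = lam * dot u o + mu * dot v o by rewrite {1}o_def !dotE.
have far : 2 * dot o o + (dot w w - rho ^+ 2) <= 2 * dot w o by rewrite wo oo; nra.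
have := dot_ge0 (w - o); rewrite dotBB; lra.
Qed.

Definition gram u v := dot u u * dot v v - dot u v ^+ 2.

(* Solving 2 <u, o> = |u|^2 and 2 <v, o> = |v|^2 for o = lam u + mu v by Cramer's
   rule gives lam = circum_coef u v and mu = circum_coef v u. *)
Definition circum_coef u v := dot v v * (dot u u - dot u v) / (2 * gram u v).

Definition circumcenter u v := circum_coef u v *: u + circum_coef v u *: v.

Lemma gramC u v : gram u v = gram v u.
Proof. by rewrite /gram mulrC dotC. Qed.

Lemma circumcenterC u v : circumcenter u v = circumcenter v u.
Proof. exact: addrC. Qed.

Lemma circumcenter_equidistant_l u v :
  gram u v != 0 -> enorm (u - circumcenter u v) = enorm (circumcenter u v).
Proof.
move=> G0; rewrite !enormE dotBB; congr Num.sqrt.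
suff -> : 2 * dot u (circumcenter u v) = dot u u by rewrite subrr add0r.
move: G0; rewrite /circumcenter /circum_coef [gram v u]gramC /gram.
by rewrite !dotE !(dotC v u) => G0; field.
Qed.

Lemma circumcenter_equidistant u v : gram u v != 0 ->
  enorm (u - circumcenter u v) = enorm (circumcenter u v) /\
  enorm (v - circumcenter u v) = enorm (circumcenter u v).
Proof.
move=> G0; split; first exact: circumcenter_equidistant_l.
by rewrite circumcenterC circumcenter_equidistant_l // gramC.
Qed.

Lemma circumcenter_sq u v : gram u v != 0 ->
  enorm (circumcenter u v) ^+ 2 =
  dot u u * dot v v * (dot u u + dot v v - 2 * dot u v) / (4 * gram u v).
Proof.
rewrite enorm_sq /circumcenter /circum_coef [gram v u]gramC /gram.
by rewrite !dotE !(dotC v u) => G0; field.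
Qed.

Lemma gram_gt0_dot u v : 0 < gram u v -> 0 < dot u u /\ 0 < dot v v.
Proof.
rewrite /gram => G0; have := dot_ge0 u; have := dot_ge0 v.
have := sqr_ge0 (dot u v); split; nra.
Qed.

Lemma circum_coef_ge0 u v : dot u v <= 0 -> 0 < gram u v -> 0 <= circum_coef u v.
Proof.
move=> K0 G0; have := dot_ge0 u; have := dot_ge0 v => A0 B0.
by rewrite /circum_coef divr_ge0 ?mulr_ge0 //; lra.
Qed.

Lemma circum_coef_sum_ge1 u v : dot u v <= 0 -> 0 < gram u v ->
  1 <= circum_coef u v + circum_coef v u.
Proof.
move=> K0 G0; have := dot_ge0 u; have := dot_ge0 v => A0 B0.
rewrite /circum_coef (gramC v u) (dotC v u) -mulrDl ler_pdivlMr ?mulr_gt0 //.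
by move: G0; rewrite /gram => G0; nra.
Qed.

Lemma outradiusE u v :
  outradius (enorm u) (enorm v) (enorm (u - v)) =
  if 0 < gram u v then (enorm (circumcenter u v))%:E else +oo%E.
Proof.
have heron : let s := (enorm u + enorm v + enorm (u - v)) / 2 in
    s * (s - enorm u) * (s - enorm v) * (s - enorm (u - v)) = gram u v / 4.
  by rewrite /= heron_sq !enorm_sq dotBB /gram; field.
rewrite /outradius /= heron pmulr_lgt0 ?invr_gt0 //; case: ifP => // G0; congr EFin.
have sqrtD : Num.sqrt (gram u v / 4) ^+ 2 = gram u v / 4.
  by rewrite sqr_sqrtr ?divr_ge0 ?ltW.
have sqrtD0 : 0 < Num.sqrt (gram u v / 4) by rewrite sqrtr_gt0 divr_gt0.
apply: (@pexpIrn _ 2) => //; rewrite ?nnegrE ?divr_ge0 ?mulr_ge0 ?enorm_ge0 ?ltW //.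
rewrite circumcenter_sq ?gt_eqF // expr_div_n !exprMn sqrtD !enorm_sq dotBB.
by field; rewrite gt_eqF.
Qed.

Lemma enormB_scale_lt u o (k : R) :
  enorm (u - o) = enorm o -> 0 < dot u u -> 1 < k ->
  enorm (u - k *: o) < enorm (k *: o).
Proof. by move/dot_equidistant => uo A0 k1; rewrite enorm_ltE dotBB !dotE; nra. Qed.

Lemma separation_degree_acute u v :
  0 < dot u v -> separation_degree u v = (enorm (u - v) / 2)%:E.
Proof.
move=> K0; apply: ereal_sup_EFin_eq => r.
  move=> lt_r w rho le_r [uw vw _]; have := enormB_le_diameter uw vw; lra.
move=> free; rewrite leNgt; apply/negP => lt_r.
pose m := 2^-1 *: (u + v).
have um : enorm (u - m) = enorm (u - v) / 2.
  have -> : u - m = 2^-1 *: (u - v) by apply/rowP => i; rewrite !mxE; field.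
  by rewrite enormZ ger0_norm ?invr_ge0 // mulrC.
have vm : enorm (v - m) = enorm (u - v) / 2.
  have -> : v - m = - 2^-1 *: (u - v) by apply/rowP => i; rewrite !mxE; field.
  by rewrite enormZ normrN ger0_norm ?invr_ge0 // mulrC.
have mc : enorm (u - v) / 2 < enorm m.
  rewrite enormZ ger0_norm ?invr_ge0 // [X in _ < X]mulrC ltr_pM2r ?invr_gt0 //.
  by rewrite enorm_ltE dotBB !dotE (dotC v u); lra.
by apply: (free m (enorm (u - v) / 2)); [lra | split; rewrite ?um ?vm].
Qed.

Lemma separation_degree_obtuse u v : dot u v <= 0 -> 0 < gram u v ->
  separation_degree u v = (enorm (circumcenter u v))%:E.
Proof.
move=> K0 G0; have [uo vo] := circumcenter_equidistant (lt0r_neq0 G0).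
have [A0 B0] := gram_gt0_dot G0.
apply: ereal_sup_EFin_eq => r.
  move=> lt_r w rho le_r sep.
  have lam0 := circum_coef_ge0 K0 G0.
  have mu0 : 0 <= circum_coef v u by apply: circum_coef_ge0; rewrite 1?dotC 1?gramC.
  have lam_mu := circum_coef_sum_ge1 K0 G0.
  have := circumcenter_enorm_le (erefl _) lam0 mu0 lam_mu uo vo sep; lra.
move=> /= free; rewrite leNgt; apply/negP => lt_r.
have o0 : 0 < enorm (circumcenter u v).
  rewrite enorm_gt // expr0n -enorm_sq circumcenter_sq ?lt0r_neq0 //.
  by move: G0; rewrite /gram => G0; rewrite divr_gt0 ?mulr_gt0 //; lra.
pose k := r / enorm (circumcenter u v).
have k1 : 1 < k by rewrite ltr_pdivlMr // mul1r.
have wr : enorm (k *: circumcenter u v) = r.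
  rewrite enormZ /k ger0_norm; first by rewrite -mulrA mulVf ?mulr1 ?lt0r_neq0.
  by rewrite divr_ge0 ?ltW // (lt_trans o0).
have uw := enormB_scale_lt uo A0 k1; have vw := enormB_scale_lt vo B0 k1.
apply: (free _ _ _ (separating_ball_max uw vw)).
by rewrite ge_max -wr !ltW.
Qed.

Lemma no_separating_ball_collinear u v r :
  dot u v <= 0 -> gram u v <= 0 -> no_separating_ball u v r.
Proof.
move=> K0 G0 w rho _ [uw vw ow].
have /enormB_lt_dot uw' := le_lt_trans uw ow.
have /enormB_lt_dot vw' := le_lt_trans vw ow.
have A0 := dot_ge0 u; have B0 := dot_ge0 v.
have [B00|B0'] := eqVneq (dot v v) 0; first by have := dot_self_eq0 w B00; lra.
pose x := dot v v *: u - dot u v *: v.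
have x0 : dot x x = 0.
  apply/eqP; rewrite eq_le dot_ge0 andbT.
  have -> : dot x x = dot v v * gram u v by rewrite /x /gram !dotE (dotC v u); ring.
  exact: mulr_ge0_le0.
have := dot_self_eq0 w x0; rewrite /x !dotE.
have : 0 < dot v v * dot u w by rewrite mulr_gt0 ?lt0r ?B0' //; lra.
have : 0 <= - dot u v * dot v w by rewrite mulr_ge0 //; lra.
lra.
Qed.

Lemma separation_degree_collinear u v :
  dot u v <= 0 -> gram u v <= 0 -> separation_degree u v = +oo%E.
Proof.
move=> K0 G0; rewrite /separation_degree -ereal_sup_real.
rewrite (_ : [set r | no_separating_ball u v r] = setT)%classic //.
by apply/seteqP; split=> // r _; exact: no_separating_ball_collinear.
Qed.

End SeparatingBalls.

Theorem theorem1 (R : realType) (n : nat) (p1 p2 p3 : 'rV[R]_n) :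
  let a := enorm (p1 - p2) in
  let b := enorm (p2 - p3) in
  let c := enorm (p1 - p3) in
  degree_monotonicity [:: p1; p2; p3] =
    (if c ^+ 2 < a ^+ 2 + b ^+ 2 then ((c / 2)%:E)%E else outradius a b c).
Proof.
move=> a b c; rewrite degree_monotonicity3.
set u := p1 - p2; set v := p3 - p2.
have -> : a = enorm u by [].
have -> : b = enorm v by rewrite /b -opprB enormN.
have -> : c = enorm (u - v) by rewrite /c /u /v opprB addrA subrK.
have -> : (enorm (u - v) ^+ 2 < enorm u ^+ 2 + enorm v ^+ 2) = (0 < dot u v).
  by rewrite !enorm_sq dotBB; apply/idP/idP => ?; lra.
rewrite outradiusE.
have [K0|K0] := ltP 0 (dot u v); first exact: separation_degree_acute.
have [G0|G0] := ltP 0 (gram u v); first exact: separation_degree_obtuse.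
exact: separation_degree_collinear.
Qed.
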